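(* For every $N\ge 1$, the $(N-1)$-star graph (one central node adjacent to each of the other $N-1$ nodes, no other edges) has complex sign rank $1$; that is, there exists $\mathbf{z}\in\mathbb{C}^N$ such that $\operatorname{sign}(A_{ij})=\operatorname{sign}(\mathfrak{Re}(z_iz_j))$ for all $i\neq j$, where $\mathbf{A}$ is its adjacency matrix.
   Context: $\operatorname{sign}:\mathbb{R}\to\{+,-\}$ takes the value $-$ on $(-\infty,0]$ and $+$ on $(0,\infty)$. Diagonal entries of adjacency matrices are ignored. The complex sign rank of $\mathbf{A}\in\mathbb{R}^{N\times N}$ is the minimal $f$ such that there exists $\mathbf{Z}\in\mathbb{C}^{N\times f}$ with $\operatorname{sign}(A_{ij})=\operatorname{sign}(\mathfrak{Re}((\mathbf{Z}\mathbf{Z}^\top)_{ij}))$ for all $i\neq j$, where $\mathbf{Z}^\top$ is the (non-conjugated) transpose. *)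

From HB Require Import structures.
From mathcomp Require Import all_boot all_order all_algebra.
From mathcomp Require Import reals.
From mathcomp Require Import complex.
Set Implicit Arguments. Unset Strict Implicit. Unset Printing Implicit Defensive.
Import Order.TTheory GRing.Theory Num.Theory.
Local Open Scope ring_scope.

(* sign : R -> {+,-}, with sign x = + iff 0 < x. We represent + by true. *)
Definition sgnpm (R : realType) (x : R) : bool := 0 < x.

(* Z : C^{N x f} sign-realizes A off the diagonal, with Z^T the plain transpose. *)
Definition complex_sign_realizes (R : realType) (N f : nat)
  (A : 'M[R]_N) (Z : 'M[R[i]]_(N, f)) : Prop :=
  forall i j : 'I_N, i != j ->
    sgnpm (A i j) = sgnpm (complex.Re ((Z *m Z^T) i j)).

Definition complex_sign_realizable (R : realType) (N : nat) (A : 'M[R]_N) (f : nat) :=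
  exists Z : 'M[R[i]]_(N, f), complex_sign_realizes A Z.

Definition complex_sign_rank_eq (R : realType) (N : nat) (A : 'M[R]_N) (f : nat) :=
  complex_sign_realizable A f /\
  forall g, complex_sign_realizable A g -> (f <= g)%N.

Definition star_adj (R : realType) (N : nat) : 'M[R]_N :=
  \matrix_(i, j) (if (i != j) && ((val i == 0%N) || (val j == 0%N)) then 1 else 0).

From mathcomp Require Import all_boot all_order all_algebra.
From mathcomp Require Import reals complex.
Set Implicit Arguments.
Unset Strict Implicit.
Unset Printing Implicit Defensive.
Import Order.TTheory GRing.Theory Num.Theory.
Local Open Scope ring_scope.

(* The centre sits at 1 and every leaf at 1 + i: a centre-leaf product has
   real part 1 > 0, while a leaf-leaf product (1 + i)^2 = 2i has real part 0.
   Width 0 is impossible as soon as there is an edge, since then Z Z^T = 0. *)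

Lemma Re_complex_mul (R : rcfType) (a b c d : R) :
  complex.Re (Complex a b * Complex c d) = a * c - b * d.
Proof. by []. Qed.

Definition star_embedding (R : realType) (N : nat) : 'M[R[i]]_(N, 1) :=
  \matrix_(i, _) (if val i == 0%N then Complex 1 0 else Complex 1 1).

Lemma star_embedding_realizes (R : realType) (N : nat) :
  complex_sign_realizes (star_adj R N) (star_embedding R N).
Proof.
move=> i j ij; rewrite /sgnpm !mxE big_ord1 !mxE ij /=.
by case: (val i == 0%N); case: (val j == 0%N);
  rewrite Re_complex_mul ?mulr1 ?mulr0 ?subr0 ?subrr ?ltr01 ?ltxx.
Qed.

Lemma complex_sign_realizable0_nonpos (R : realType) (N : nat) (A : 'M[R]_N) :
  complex_sign_realizable A 0 -> forall i j : 'I_N, i != j -> A i j <= 0.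
Proof.
case=> Z realZ i j ij; move: (realZ i j ij).
by rewrite /sgnpm !mxE big_ord0 ltxx => /negbT; rewrite -leNgt.
Qed.

Lemma complex_sign_rank_eq1 (R : realType) (N : nat) (A : 'M[R]_N) (i j : 'I_N) :
  i != j -> 0 < A i j -> complex_sign_realizable A 1 -> complex_sign_rank_eq A 1.
Proof.
move=> ij Aij_gt0 realA1; split=> // [[|g]] // realA0.
by move: (complex_sign_realizable0_nonpos realA0 ij); rewrite leNgt Aij_gt0.
Qed.

Theorem theorem4 (R : realType) (N : nat) (hN : (1 <= N)%N) :
  complex_sign_realizable (star_adj R N) 1 /\
  ((2 <= N)%N -> complex_sign_rank_eq (star_adj R N) 1).
Proof.
have realizable1 : complex_sign_realizable (star_adj R N) 1.
  by exists (star_embedding R N); apply: star_embedding_realizes.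
split=> // N_ge2.
apply: (complex_sign_rank_eq1 (i := Ordinal hN) (j := Ordinal N_ge2)) => //.
by rewrite mxE /= ltr01.
Qed.
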